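(* Let $(\Omega,D)$ be a chromology and let $X:\mathbf{Seg}(\Omega)\to\mathbf{Icm}$ be a $\mathcal{W}^{\mathrm{mon}}$-pedigrad for $(\Omega,D)$. Let $f:Y\Rightarrow X$ be a morphism in the functor category $[\mathbf{Seg}(\Omega),\mathbf{Icm}]$, let $u_1,u_2:R\Rightarrow Y$ be the pullback of $f$ along itself, and let $q:Y\Rightarrow Y_X$ be the coequalizer of $(u_1,u_2)$ in $[\mathbf{Seg}(\Omega),\mathbf{Icm}]$. Then $Y_X$ is a $\mathcal{W}^{\mathrm{mon}}$-pedigrad for $(\Omega,D)$.
   Context: For $n\ge1$, $[n]=\{1,\dots,n\}$ ordered as usual, $[0]=\emptyset$. For a pre-ordered set $(\Omega,\preceq)$, a segment is a pair $(t,c)$ with $t:[n_1]\to[n_0]$ an order-preserving surjection and $c:[n_0]\to\Omega$; its domain is $[n_1]$. A morphism $(t,c)\to(t',c')$ is a pair $(f_1,f_0)$, $f_1:[n_1]\to[n_1']$ an order-preserving injection, $f_0:[n_0]\to[n_0']$ order-preserving, with $t'f_1=f_0t$ and $c'(f_0(i))\preceq c(i)$ for all $i$; this gives the category $\mathbf{Seg}(\Omega)$. $\mathbf{Seg}(\Omega\,|\,n)$ is the subcategory of segments of domain $[n]$ and morphisms with $f_1=\mathrm{id}$. A chromology $(\Omega,D)$ is a pre-ordered set $\Omega$ equipped, for each $n\ge0$, with a set $D[n]$ of cones in $\mathbf{Seg}(\Omega\,|\,n)$ (a cone being a small category $A$, a functor $\theta:A\to\mathbf{Seg}(\Omega\,|\,n)$,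 an object $\tau$ and a natural transformation from the constant functor at $\tau$ to $\theta$). $\mathbf{Icm}$ is the category of idempotent commutative monoids and monoid morphisms. $\mathcal{W}^{\mathrm{mon}}$ is the class of wide spans in $\mathbf{Icm}$, i.e. cones $\{Z\to F_i\}_{i\in[k]}$ indexed by a finite discrete category, whose induced map $Z\to\prod_{i\in[k]}F_i$ is a monomorphism in $\mathbf{Icm}$. A $\mathcal{W}^{\mathrm{mon}}$-pedigrad for $(\Omega,D)$ is a functor $\mathbf{Seg}(\Omega)\to\mathbf{Icm}$ sending, for every $n\ge0$, each cone in $D[n]$ to a cone belonging to $\mathcal{W}^{\mathrm{mon}}$. Pullbacks and coequalizers in $[\mathbf{Seg}(\Omega),\mathbf{Icm}]$ are computed objectwise. *)

From mathcomp Require Import all_boot.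
From Stdlib Require Import FunctionalExtensionality.
Set Implicit Arguments. Unset Strict Implicit. Unset Printing Implicit Defensive.

(* Convention: [n] = {1,...,n} is represented by the ordinal type 'I_n = {0,...,n-1},
   which is order-isomorphic to it. *)

Record preord := Preord {
  pcar :> Type;
  ple : pcar -> pcar -> Prop;
  ple_refl : forall x, ple x x;
  ple_trans : forall x y z, ple x y -> ple y z -> ple x z }.

Record seg (O : preord) := Seg {
  n1 : nat; n0 : nat;
  st : 'I_n1 -> 'I_n0;
  st_mono : forall i j : 'I_n1, i <= j -> st i <= st j;
  st_surj : forall j : 'I_n0, exists i, st i = j;
  sc : 'I_n0 -> O }.

Record segHom (O : preord) (S S' : seg O) := SegHom {
  f1 : 'I_(n1 S) -> 'I_(n1 S');
  f1_mono : forall i j : 'I_(n1 S), i <= j -> f1 i <= f1 j;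
  f1_inj : injective f1;
  f0 : 'I_(n0 S) -> 'I_(n0 S');
  f0_mono : forall i j : 'I_(n0 S), i <= j -> f0 i <= f0 j;
  f_comm : forall i, @st _ S' (f1 i) = f0 (@st _ S i);
  f_col : forall i, ple (@sc _ S' (f0 i)) (@sc _ S i) }.

Definition segId (O : preord) (S : seg O) : segHom S S.
Proof.
refine (@SegHom O S S id _ _ id _ _ _) => //.
by move=> i; apply: ple_refl.
Defined.

Definition segComp (O : preord) (S S' S'' : seg O)
  (g : segHom S' S'') (f : segHom S S') : segHom S S''.
Proof.
refine (@SegHom O S S'' (f1 g \o f1 f) _ _ (f0 g \o f0 f) _ _ _).
- by move=> i j Hij; apply: f1_mono; apply: f1_mono.
- by apply: inj_comp; apply: f1_inj.
- by move=> i j Hij; apply: f0_mono; apply: f0_mono.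
- by move=> i /=; rewrite f_comm f_comm.
- by move=> i /=; apply: ple_trans (f_col g _) (f_col f _).
Defined.

Definition segHom_eq (O : preord) (S S' : seg O) (g h : segHom S S') :=
  (forall i, f1 g i = f1 h i) /\ (forall i, f0 g i = f0 h i).

Record icm := Icm {
  icar :> Type;
  iop : icar -> icar -> icar;
  ie : icar;
  iopA : forall x y z, iop x (iop y z) = iop (iop x y) z;
  iopC : forall x y, iop x y = iop y x;
  iop1 : forall x, iop ie x = x;
  iopI : forall x, iop x x = x }.

Record icmHom (A B : icm) := IcmHom {
  ifun :> icar A -> icar B;
  ifun_op : forall x y, ifun (iop x y) = iop (ifun x) (ifun y);
  ifun_e : ifun (ie A) = ie B }.

Definition isMono (A B : icm) (m : icmHom A B) :=
  forall (C : icm) (g h : icmHom C A),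
    (forall x, m (g x) = m (h x)) -> forall x, g x = h x.

Definition prod_icm (k : nat) (F : 'I_k -> icm) : icm.
Proof.
refine (@Icm (forall i, icar (F i)) (fun x y i => iop (x i) (y i))
              (fun i => ie (F i)) _ _ _ _).
- by move=> x y z; apply: functional_extensionality_dep => i; apply: iopA.
- by move=> x y; apply: functional_extensionality_dep => i; apply: iopC.
- by move=> x; apply: functional_extensionality_dep => i; apply: iop1.
- by move=> x; apply: functional_extensionality_dep => i; apply: iopI.
Defined.

Definition pairing (Z : icm) (k : nat) (F : 'I_k -> icm)
  (leg : forall i, icmHom Z (F i)) : icmHom Z (prod_icm F).
Proof.
refine (@IcmHom Z (prod_icm F) (fun z i => leg i z) _ _).
- by move=> x y; apply: functional_extensionality_dep => i; apply: ifun_op.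
- by apply: functional_extensionality_dep => i; apply: ifun_e.
Defined.

Record cat := Cat {
  ob : Type;
  hom : ob -> ob -> Type;
  cid : forall a, hom a a;
  ccomp : forall a b c, hom b c -> hom a b -> hom a c;
  ccomp1l : forall a b (g : hom a b), ccomp (cid b) g = g;
  ccomp1r : forall a b (g : hom a b), ccomp g (cid a) = g;
  ccompA : forall a b c d (h : hom c d) (g : hom b c) (f : hom a b),
      ccomp h (ccomp g f) = ccomp (ccomp h g) f }.

(** A discrete category: every morphism is an identity *)
Definition discrete (A : cat) :=
  forall (a b : ob A) (g : hom a b),
    existT (fun p : ob A * ob A => hom p.1 p.2) (a, b) g
    = existT (fun p : ob A * ob A => hom p.1 p.2) (a, a) (cid a).

(** Objects of Seg(Omega|n) are segments of domain [n]; morphisms have f1 = id. *)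
Record segCone (O : preord) (n : nat) := SegCone {
  cA : cat;
  cth : ob cA -> seg O;
  cth_dom : forall a, n1 (cth a) = n;
  cthh : forall a b, hom a b -> segHom (cth a) (cth b);
  cthh_id1 : forall a b (g : hom a b) i,
      nat_of_ord (f1 (cthh g) i) = nat_of_ord i;
  cthh_id : forall a, segHom_eq (cthh (cid a)) (segId (cth a));
  cthh_comp : forall a b c (g : hom b c) (h : hom a b),
      segHom_eq (cthh (ccomp g h)) (segComp (cthh g) (cthh h));
  ctau : seg O;
  ctau_dom : n1 ctau = n;
  clam : forall a, segHom ctau (cth a);
  clam_id1 : forall a i, nat_of_ord (f1 (clam a) i) = nat_of_ord i;
  clam_nat : forall a b (g : hom a b),
      segHom_eq (segComp (cthh g) (clam a)) (clam b) }.

Record chromology := Chromology {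
  cO : preord;
  cD : forall n : nat, segCone cO n -> Prop }.

Record segFun (O : preord) := SegFun {
  F0 : seg O -> icm;
  F1 : forall S S', segHom S S' -> icmHom (F0 S) (F0 S');
  F1_id : forall S x, F1 (segId S) x = x;
  F1_comp : forall S S' S'' (g : segHom S' S'') (f : segHom S S') x,
      F1 (segComp g f) x = F1 g (F1 f x) }.

Record natTrans (O : preord) (X Y : segFun O) := NatTrans {
  nt : forall S, icmHom (F0 X S) (F0 Y S);
  nt_nat : forall S S' (g : segHom S S') x,
      nt S' (F1 X g x) = F1 Y g (nt S x) }.

Definition icmComp (A B C : icm) (g : icmHom B C) (f : icmHom A B) : icmHom A C.
Proof.
refine (@IcmHom A C (fun x => g (f x)) _ _).
- by move=> x y; rewrite (ifun_op f) (ifun_op g).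
- by rewrite (ifun_e f) (ifun_e g).
Defined.

Definition ntComp (O : preord) (X Y Z : segFun O)
  (g : natTrans Y Z) (f : natTrans X Y) : natTrans X Z.
Proof.
refine (@NatTrans O X Z (fun S => icmComp (nt g S) (nt f S)) _).
by move=> S S' h x /=; rewrite !nt_nat.
Defined.

Definition ntEq (O : preord) (X Y : segFun O) (f g : natTrans X Y) :=
  forall S x, nt f S x = nt g S x.

Definition isPullback (O : preord) (X Y Z R : segFun O)
  (f : natTrans Y X) (g : natTrans Z X) (p1 : natTrans R Y) (p2 : natTrans R Z) :=
  ntEq (ntComp f p1) (ntComp g p2) /\
  forall (P : segFun O) (a : natTrans P Y) (b : natTrans P Z),
    ntEq (ntComp f a) (ntComp g b) ->
    exists h : natTrans P R,
      [/\ ntEq (ntComp p1 h) a, ntEq (ntComp p2 h) b &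
        forall h' : natTrans P R,
          ntEq (ntComp p1 h') a -> ntEq (ntComp p2 h') b -> ntEq h' h].

Definition isCoequalizer (O : preord) (R Y Q : segFun O)
  (u1 u2 : natTrans R Y) (q : natTrans Y Q) :=
  ntEq (ntComp q u1) (ntComp q u2) /\
  forall (Z : segFun O) (g : natTrans Y Z),
    ntEq (ntComp g u1) (ntComp g u2) ->
    exists h : natTrans Q Z,
      ntEq (ntComp h q) g /\
      forall h' : natTrans Q Z, ntEq (ntComp h' q) g -> ntEq h' h.

Definition Wmon (A : cat) (Z : icm) (F : ob A -> icm)
  (leg : forall a, icmHom Z (F a)) :=
  discrete A /\
  exists (k : nat) (e : 'I_k -> ob A),
    bijective e /\ isMono (pairing (fun i => leg (e i))).

Definition pedigrad (C : chromology) (X : segFun (cO C)) :=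
  forall (n : nat) (c : segCone (cO C) n), cD c ->
    Wmon (fun a : ob (cA c) => F1 X (clam a)).

From mathcomp Require Import all_boot.
From Stdlib Require Import ProofIrrelevance FunctionalExtensionality.
Set Implicit Arguments. Unset Strict Implicit. Unset Printing Implicit Defensive.

(* Objectwise, the coequalizer q is surjective, since it factors through its
   image subfunctor; and because (u1, u2) is the kernel pair of f, the map
   Y_X => X induced by f is injective.  So Y_X is a subfunctor of X, and
   restricting a cone along an injection preserves monicity of the induced
   map into the product. *)

Lemma sig_eq (A : Type) (P : A -> Prop) (x y : {a | P a}) :
  proj1_sig x = proj1_sig y -> x = y.
Proof. exact: (eq_sig_hprop (fun a => proof_irrelevance (P a))). Qed.

Section SubIcm.

Variables (A : icm) (P : A -> Prop).
Hypotheses (P_op : forall x y, P x -> P y -> P (iop x y)) (P_e : P (ie A)).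

Definition subIcm : icm.
Proof.
refine (@Icm {x | P x}
  (fun x y => exist _ (iop (proj1_sig x) (proj1_sig y))
                (P_op (proj2_sig x) (proj2_sig y)))
  (exist _ (ie A) P_e) _ _ _ _).
- by move=> x y z; apply: sig_eq; apply: iopA.
- by move=> x y; apply: sig_eq; apply: iopC.
- by move=> x; apply: sig_eq; apply: iop1.
- by move=> x; apply: sig_eq; apply: iopI.
Defined.

Definition subIcm_corestr (B : icm) (m : icmHom B A) (mP : forall x, P (m x)) :
  icmHom B subIcm.
Proof.
refine (@IcmHom B subIcm (fun x => exist P (m x) (mP x)) _ _).
- by move=> x y; apply: sig_eq; apply: ifun_op.
- by apply: sig_eq; apply: ifun_e.
Defined.

End SubIcm.

Definition subIcm_map (A B : icm) (P : A -> Prop) (Q : B -> Prop)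
  (P_op : forall x y, P x -> P y -> P (iop x y)) (P_e : P (ie A))
  (Q_op : forall x y, Q x -> Q y -> Q (iop x y)) (Q_e : Q (ie B))
  (m : icmHom A B) (mP : forall x, P x -> Q (m x)) :
  icmHom (subIcm P_op P_e) (subIcm Q_op Q_e).
Proof.
refine (@IcmHom (subIcm P_op P_e) (subIcm Q_op Q_e)
  (fun x => exist _ (m (proj1_sig x)) (mP _ (proj2_sig x))) _ _).
- by move=> x y; apply: sig_eq; apply: ifun_op.
- by apply: sig_eq; apply: ifun_e.
Defined.

Definition prodIcm (A B : icm) : icm.
Proof.
refine (@Icm (A * B)%type (fun x y => (iop x.1 y.1, iop x.2 y.2))
  (ie A, ie B) _ _ _ _).
- by move=> [a b] [c d] [e g] /=; rewrite !iopA.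
- by move=> [a b] [c d] /=; rewrite (iopC a) (iopC b).
- by move=> [a b] /=; rewrite !iop1.
- by move=> [a b] /=; rewrite !iopI.
Defined.

Definition prodIcm_map (A B A' B' : icm) (m : icmHom A A') (m' : icmHom B B') :
  icmHom (prodIcm A B) (prodIcm A' B').
Proof.
refine (@IcmHom (prodIcm A B) (prodIcm A' B') (fun x => (m x.1, m' x.2)) _ _).
- by move=> [a b] [c d] /=; rewrite !ifun_op.
- by rewrite /= !ifun_e.
Defined.

Lemma isMono_pairing_restrict (Z Z' : icm) (k : nat) (F F' : 'I_k -> icm)
  (leg : forall i, icmHom Z (F i)) (leg' : forall i, icmHom Z' (F' i))
  (m : icmHom Z Z') (n : forall i, icmHom (F i) (F' i)) :
  injective m -> (forall i z, leg' i (m z) = n i (leg i z)) ->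
  isMono (pairing leg') -> isMono (pairing leg).
Proof.
move=> m_inj legE mono' D g h gh x; apply: m_inj.
apply: (mono' D (icmComp m g) (icmComp m h)) => y /=.
apply: functional_extensionality_dep => i; rewrite !legE.
by congr (n i _); exact: (congr1 (fun p => p i) (gh y)).
Qed.

Section SegFunctors.

Variable O : preord.

Definition ntId (F : segFun O) : natTrans F F :=
  @NatTrans O F F
    (fun S => @IcmHom (F0 F S) (F0 F S) id (fun _ _ => erefl) erefl)
    (fun _ _ _ _ => erefl).

Definition prodFun (F G : segFun O) : segFun O.
Proof.
refine (@SegFun O (fun S => prodIcm (F0 F S) (F0 G S))
  (fun S S' g => prodIcm_map (F1 F g) (F1 G g)) _ _).
- by move=> S [a b] /=; rewrite !F1_id.
- by move=> S S' S'' g h [a b] /=; rewrite !F1_comp.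
Defined.

Definition prodFun_fst (F G : segFun O) : natTrans (prodFun F G) F :=
  @NatTrans O (prodFun F G) F
    (fun S => @IcmHom (F0 (prodFun F G) S) (F0 F S) fst
                (fun _ _ => erefl) erefl)
    (fun _ _ _ _ => erefl).

Definition prodFun_snd (F G : segFun O) : natTrans (prodFun F G) G :=
  @NatTrans O (prodFun F G) G
    (fun S => @IcmHom (F0 (prodFun F G) S) (F0 G S) snd
                (fun _ _ => erefl) erefl)
    (fun _ _ _ _ => erefl).

Section SubFunctor.

Variables (F : segFun O) (P : forall S, F0 F S -> Prop).
Arguments P : clear implicits.
Hypotheses (P_op : forall S x y, P S x -> P S y -> P S (iop x y))
           (P_e : forall S, P S (ie _))
           (P_map : forall S S' (g : segHom S S') x, P S x -> P S' (F1 F g x)).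

Definition subFun : segFun O.
Proof.
refine (@SegFun O (fun S => subIcm (@P_op S) (P_e S))
  (fun S S' g => subIcm_map (@P_op S) (P_e S) (@P_op S') (P_e S')
                   (@P_map S S' g)) _ _).
- by move=> S x; apply: sig_eq; apply: F1_id.
- by move=> S S' S'' g h x; apply: sig_eq; apply: F1_comp.
Defined.

Definition subFun_incl : natTrans subFun F :=
  @NatTrans O subFun F
    (fun S => @IcmHom (F0 subFun S) (F0 F S) (@proj1_sig _ _)
                (fun _ _ => erefl) erefl)
    (fun _ _ _ _ => erefl).

Definition subFun_corestr (G : segFun O) (m : natTrans G F)
  (mP : forall S x, P S (nt m S x)) : natTrans G subFun.
Proof.
refine (@NatTrans O G subFun
  (fun S => subIcm_corestr (@P_op S) (P_e S) (mP S)) _).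
by move=> S S' g x; apply: sig_eq; apply: nt_nat.
Defined.

End SubFunctor.

Section Image.

Variables (Y Q : segFun O) (q : natTrans Y Q).

Definition inImage (S : seg O) (z : F0 Q S) : Prop := exists y, nt q S y = z.

Lemma inImage_op (S : seg O) (x y : F0 Q S) :
  inImage x -> inImage y -> inImage (iop x y).
Proof. by move=> [a <-] [b <-]; exists (iop a b); rewrite ifun_op. Qed.

Lemma inImage_e (S : seg O) : inImage (ie (F0 Q S)).
Proof. by exists (ie _); rewrite ifun_e. Qed.

Lemma inImage_map S S' (g : segHom S S') z : inImage z -> inImage (F1 Q g z).
Proof. by move=> [y <-]; exists (F1 Y g y); rewrite nt_nat. Qed.

Definition imageFun : segFun O := subFun inImage_op inImage_e inImage_map.

Definition imageFun_corestr : natTrans Y imageFun :=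
  subFun_corestr inImage_op inImage_e inImage_map
    (fun S y => ex_intro _ y erefl).

End Image.

Section KernelPair.

Variables (Y X : segFun O) (f : natTrans Y X).

Definition inKernelPair (S : seg O) (p : F0 (prodFun Y Y) S) : Prop :=
  nt f S p.1 = nt f S p.2.

Lemma inKernelPair_op (S : seg O) (x y : F0 (prodFun Y Y) S) :
  inKernelPair x -> inKernelPair y -> inKernelPair (iop x y).
Proof. by rewrite /inKernelPair /= !ifun_op => -> ->. Qed.

Lemma inKernelPair_e (S : seg O) : inKernelPair (ie (F0 (prodFun Y Y) S)).
Proof. by rewrite /inKernelPair /= !ifun_e. Qed.

Lemma inKernelPair_map S S' (g : segHom S S') p :
  inKernelPair p -> inKernelPair (F1 (prodFun Y Y) g p).
Proof. by rewrite /inKernelPair /= !nt_nat => ->. Qed.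

Definition kernelPairFun : segFun O :=
  subFun inKernelPair_op inKernelPair_e inKernelPair_map.

Definition kernelPair_fst : natTrans kernelPairFun Y :=
  ntComp (prodFun_fst Y Y) (subFun_incl _ _ _).

Definition kernelPair_snd : natTrans kernelPairFun Y :=
  ntComp (prodFun_snd Y Y) (subFun_incl _ _ _).

End KernelPair.

Lemma coequalizer_surjective (R Y Q : segFun O) (u1 u2 : natTrans R Y)
  (q : natTrans Y Q) :
  isCoequalizer u1 u2 q -> forall S z, exists y, nt q S y = z.
Proof.
move=> [qu12 coeq_univ].
have [k [kq _]] := coeq_univ _ (imageFun_corestr q)
  ltac:(by move=> S x; apply: sig_eq; exact: qu12).
(* The identity and the inclusion of the image after k both factor q
   through q. *)
have [h0 [_ q_unique]] := coeq_univ _ q qu12.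
have idE := q_unique (ntId Q) (fun _ _ => erefl).
have inclkE := q_unique (ntComp (subFun_incl _ _ _) k)
  ltac:(by move=> S y; exact: (congr1 (@proj1_sig _ _) (kq S y))).
move=> S z; have <- : proj1_sig (nt k S z) = z.
  exact: etrans (inclkE S z) (esym (idE S z)).
exact: proj2_sig (nt k S z).
Qed.

(* Elements with the same image under f form a point of the kernel pair,
   which the pullback lifts to R. *)
Lemma kernel_pair_coequalized (X Y R Z : segFun O) (f : natTrans Y X)
  (u1 u2 : natTrans R Y) (g : natTrans Y Z) :
  isPullback f f u1 u2 -> ntEq (ntComp g u1) (ntComp g u2) ->
  forall S y y', nt f S y = nt f S y' -> nt g S y = nt g S y'.
Proof.
move=> [_ pb_univ] gu12 S y y' fyy'.
have [m [u1m u2m _]] := pb_univ _ (kernelPair_fst f) (kernelPair_snd f)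
  ltac:(by move=> S0 [p Hp]).
pose p : F0 (kernelPairFun f) S := exist _ (y, y') fyy'.
by rewrite -[y](u1m S p) -[y'](u2m S p); exact: gu12.
Qed.

Lemma kernel_pair_coequalizer_mono_factor (X Y R Q : segFun O)
  (f : natTrans Y X) (u1 u2 : natTrans R Y) (q : natTrans Y Q) :
  isPullback f f u1 u2 -> isCoequalizer u1 u2 q ->
  exists h : natTrans Q X, ntEq (ntComp h q) f /\ forall S, injective (nt h S).
Proof.
move=> pb coeq; have [h [hq _]] := coeq.2 _ f pb.1.
exists h; split=> // S a b.
have [y <-] := coequalizer_surjective coeq a.
have [y' <-] := coequalizer_surjective coeq b.
move: (hq S y) (hq S y') => /= -> -> fyy'.
exact: kernel_pair_coequalized pb coeq.1 _ _ _ fyy'.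
Qed.

End SegFunctors.

Lemma pedigrad_of_injective (C : chromology) (X Q : segFun (cO C))
  (h : natTrans Q X) :
  (forall S, injective (nt h S)) -> pedigrad X -> pedigrad Q.
Proof.
move=> h_inj pedX n c Dc; have [disc [k [e [e_bij monoX]]]] := pedX n c Dc.
split=> //; exists k, e; split=> //.
apply: (isMono_pairing_restrict (n := fun i => nt h (cth (e i))))
  (h_inj (ctau c)) _ monoX => i z.
exact: esym (nt_nat h _ _).
Qed.

Theorem mainTheorem9 (C : chromology) (X Y R YX : segFun (cO C))
  (f : natTrans Y X) (u1 u2 : natTrans R Y) (q : natTrans Y YX) :
  pedigrad X -> isPullback f f u1 u2 -> isCoequalizer u1 u2 q -> pedigrad YX.
Proof.
move=> pedX pb coeq.
have [h [_ h_inj]] := kernel_pair_coequalizer_mono_factor pb coeq.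
exact: pedigrad_of_injective h_inj pedX.
Qed.
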